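(* Let $G$ and $H$ be graphs such that the direct product $G\times H$ is $1$-perfectly orientable. Then: (1) if one of $G$, $H$ contains an induced $P_3$ or an induced $C_3$, then the other one contains none of the claw $K_{1,3}$, $C_3$, $C_4$, $C_5$, $P_5$ as an induced subgraph; (2) at least one of $G$ and $H$ contains no induced $C_3$ (i.e. is triangle-free); (3) at least one of $G$ and $H$ contains no induced $P_4$.
   Context: All graphs are finite and simple. An orientation of a graph $G$ is $1$-perfect if the out-neighborhood of every vertex induces a clique in $G$; $G$ is $1$-perfectly orientable if it admits a $1$-perfect orientation. The direct product $G\times H$ has vertex set $V(G)\times V(H)$, with $(u,v),(u',v')$ adjacent iff $uu'\in E(G)$ and $vv'\in E(H)$. $P_n$ and $C_n$ denote the path and cycle on $n$ vertices; the claw is $K_{1,3}$. *)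

From mathcomp Require Import all_boot.
Set Implicit Arguments. Unset Strict Implicit. Unset Printing Implicit Defensive.

Definition simple_graph (T : finType) (e : rel T) : Prop :=
  irreflexive e /\ symmetric e.

Definition dprod_rel (T1 T2 : finType) (g : rel T1) (h : rel T2) : rel (T1 * T2)%type :=
  fun x y => g x.1 y.1 && h x.2 y.2.

Definition orientation (T : finType) (e : rel T) (D : rel T) : Prop :=
  [/\ forall x y, D x y -> e x y,
      forall x y, e x y -> D x y || D y x
    & forall x y, D x y -> ~~ D y x].

Definition one_perfect (T : finType) (e : rel T) (D : rel T) : Prop :=
  forall v x y, D v x -> D v y -> x != y -> e x y.

Definition one_perfectly_orientable (T : finType) (e : rel T) : Prop :=
  exists D : rel T, orientation e D /\ one_perfect e D.

Definition path_graph (n : nat) : rel 'I_n :=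
  fun i j => (i.+1 == j :> nat) || (j.+1 == i :> nat).
Definition cycle_graph (n : nat) : rel 'I_n :=
  fun i j => (i.+1 %% n == j :> nat) || (j.+1 %% n == i :> nat).
Arguments path_graph n : clear implicits.
Arguments cycle_graph n : clear implicits.
Definition claw_graph : rel 'I_4 :=
  fun i j => (i != j) && ((i == 0 :> nat) || (j == 0 :> nat)).

Definition has_induced (T : finType) (e : rel T) (n : nat) (p : rel 'I_n) : Prop :=
  exists f : 'I_n -> T, injective f /\ forall i j, e (f i) (f j) = p i j.

Definition forbidden_five (T : finType) (e : rel T) : Prop :=
  [/\ ~ @has_induced T e 4 claw_graph, ~ @has_induced T e 3 (cycle_graph 3),
      ~ @has_induced T e 4 (cycle_graph 4), ~ @has_induced T e 5 (cycle_graph 5)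
    & ~ @has_induced T e 5 (path_graph 5)].

From mathcomp Require Import all_boot zmodp.
From Stdlib Require Import Classical.
Set Implicit Arguments. Unset Strict Implicit. Unset Printing Implicit Defensive.

(* In a 1-perfect orientation an arc u -> v forces w -> u for every neighbour w
   of u that is not adjacent to v, since u -> w would make v and w adjacent.
   If some edge uv has a chain of forcings from u -> v to v -> u and another one
   back, the graph admits no 1-perfect orientation. Such chains are found by
   computation in the products P3 x X and C3 x X for X among claw, C3, C4, C5, P5,
   and in P4 x P4; the properties transfer to G x H because a 1-perfect
   orientation restricts to induced subgraphs and the direct product is
   symmetric. *)

Section Forcing.

Variables (T : finType) (e : rel T).

Definition forces : rel (T * T) :=
  fun a b => [&& b.2 == a.1, e a.1 b.1, ~~ e a.2 b.1 & b.1 != a.2].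

Lemma forces_arc D a b : orientation e D -> one_perfect e D ->
  forces a b -> D a.1 a.2 -> D b.1 b.2.
Proof.
case=> _ eD _ perfD /and4P [/eqP -> eab nab neq] Da.
case/orP: (eD _ _ eab) => // Dab.
by move: nab; rewrite (perfD _ _ _ Da Dab) // eq_sym.
Qed.

Lemma connect_forces_arc D a b : orientation e D -> one_perfect e D ->
  connect forces a b -> D a.1 a.2 -> D b.1 b.2.
Proof.
move=> oD perfD /connectP [s]; elim: s a => [|c s IHs] a /=; first by move=> _ ->.
by case/andP=> fac pcs lastb Da; apply: IHs pcs lastb (forces_arc oD perfD fac Da).
Qed.

Lemma forcing_cycle_not_opo a : e a.1 a.2 ->
  connect forces a (a.2, a.1) -> connect forces (a.2, a.1) a ->
  ~ one_perfectly_orientable e.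
Proof.
move=> ea fwd bwd [D [oD perfD]]; have [_ eD asymD] := oD.
case/orP: (eD _ _ ea) => Da.
  by move: (asymD _ _ Da); rewrite (connect_forces_arc oD perfD fwd Da).
by move: (asymD _ _ Da); rewrite (connect_forces_arc oD perfD bwd Da).
Qed.

End Forcing.

Section ListReach.

Variables (T : finType) (r : rel T) (vs : seq T).

Definition reach_step (S : seq T) : seq T :=
  [seq y <- vs | has (fun z => (z == y) || r z y) S].

Fixpoint reach_iter (fuel : nat) (S : seq T) : seq T :=
  if fuel is k.+1 then
    let S' := reach_step S in
    if size S' <= size S then S else reach_iter k S'
  else S.

(* An under-approximation of the [r]-closure of [x] inside [vs]: only its
   soundness is needed. *)
Definition reach (x : T) : seq T := reach_iter (size vs) [:: x].

Lemma reach_step_connect x S :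
  {subset S <= connect r x} -> {subset reach_step S <= connect r x}.
Proof.
move=> Sx y; rewrite mem_filter => /andP [/hasP [z zS /orP [/eqP <- | rzy]] _].
  exact: Sx.
exact: connect_trans (Sx _ zS) (connect1 rzy).
Qed.

Lemma reach_iter_connect x k S :
  {subset S <= connect r x} -> {subset reach_iter k S <= connect r x}.
Proof.
elim: k S => [|k IHk] S Sx //=.
by case: ifP => _; [apply: Sx | apply/IHk/reach_step_connect].
Qed.

Lemma reach_connect x y : y \in reach x -> connect r x y.
Proof.
have x_x: {subset [:: x] <= connect r x} by move=> z; rewrite inE => /eqP ->; apply: connect0.
exact: reach_iter_connect x_x y.
Qed.

End ListReach.

Definition arcs (T : finType) (e : rel T) (vs : seq T) : seq (T * T) :=
  [seq a <- [seq (x, y) | x <- vs, y <- vs] | e a.1 a.2].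

Definition forcing_cycleb (T : finType) (e : rel T) (vs : seq T) : bool :=
  let reach_arcs := reach (forces e) (arcs e vs) in
  has (fun a => ((a.2, a.1) \in reach_arcs a) && (a \in reach_arcs (a.2, a.1)))
      (arcs e vs).

Lemma forcing_cycleb_not_opo (T : finType) (e : rel T) (vs : seq T) :
  forcing_cycleb e vs -> ~ one_perfectly_orientable e.
Proof.
case/hasP=> a; rewrite mem_filter => /andP [ea _] /andP [fwd bwd].
exact: forcing_cycle_not_opo ea (reach_connect fwd) (reach_connect bwd).
Qed.

Lemma opo_inj (T T' : finType) (e : rel T) (e' : rel T') (f : T' -> T) :
  injective f -> (forall x y, e' x y = e (f x) (f y)) ->
  one_perfectly_orientable e -> one_perfectly_orientable e'.
Proof.
move=> f_inj fe [D [[De eD asymD] perfD]].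
exists (fun x y => D (f x) (f y)); split; first split.
- by move=> x y /De; rewrite fe.
- by move=> x y; rewrite fe => /eD.
- by move=> x y /asymD.
move=> v x y Dvx Dvy nxy; rewrite fe; apply: perfD Dvx Dvy _.
by apply: contra nxy => /eqP /f_inj ->.
Qed.

Lemma opo_dprodC (T1 T2 : finType) (g : rel T1) (h : rel T2) :
  one_perfectly_orientable (dprod_rel g h) -> one_perfectly_orientable (dprod_rel h g).
Proof.
apply: (@opo_inj _ _ _ _ (fun x => (x.2, x.1))); first by move=> [? ?] [? ?] [-> ->].
by move=> x y; rewrite /dprod_rel andbC.
Qed.

Lemma opo_dprod_induced (T1 T2 : finType) (g : rel T1) (h : rel T2) n m
    (p : rel 'I_n) (q : rel 'I_m) :
  has_induced g p -> has_induced h q ->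
  one_perfectly_orientable (dprod_rel g h) -> one_perfectly_orientable (dprod_rel p q).
Proof.
move=> [f [f_inj fp]] [f' [f'_inj f'q]].
apply: (@opo_inj _ _ _ _ (fun x => (f x.1, f' x.2))).
  by move=> [? ?] [? ?] /= [/f_inj -> /f'_inj ->].
by move=> x y; rewrite /dprod_rel /= fp f'q.
Qed.

(* Vertices are listed through [inZp] because [enum] and [ord_enum] are
   locked or go through opaque proofs, and do not reduce under [vm_compute]. *)
Definition ord_pairs n m : seq ('I_n.+1 * 'I_m.+1) :=
  [seq (inZp i, inZp j) | i <- iota 0 n.+1, j <- iota 0 m.+1].

Definition obstructs n m (p : rel 'I_n.+1) (q : rel 'I_m.+1) : bool :=
  forcing_cycleb (dprod_rel p q) (ord_pairs n m).

Lemma not_opo_dprod_induced (T1 T2 : finType) (g : rel T1) (h : rel T2) n m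
    (p : rel 'I_n.+1) (q : rel 'I_m.+1) :
  obstructs p q -> has_induced g p -> has_induced h q ->
  ~ one_perfectly_orientable (dprod_rel g h).
Proof.
by move=> /forcing_cycleb_not_opo pq gp hq /(opo_dprod_induced gp hq).
Qed.

Definition obstructs_five n (p : rel 'I_n.+1) : bool :=
  [&& obstructs p claw_graph, obstructs p (cycle_graph 3),
      obstructs p (cycle_graph 4), obstructs p (cycle_graph 5)
    & obstructs p (path_graph 5)].

Lemma forbidden_five_opo (T1 T2 : finType) (g : rel T1) (h : rel T2) n
    (p : rel 'I_n.+1) :
  obstructs_five p -> has_induced g p ->
  one_perfectly_orientable (dprod_rel g h) -> forbidden_five h.
Proof.
case/and5P=> oK oC3 oC4 oC5 oP5 gp gh.
by split=> hq; [move: oK | move: oC3 | move: oC4 | move: oC5 | move: oP5]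
  => o; apply: not_opo_dprod_induced o gp hq gh.
Qed.

Lemma obstructs_five_P3 : obstructs_five (path_graph 3).
Proof. by vm_compute. Qed.

Lemma obstructs_five_C3 : obstructs_five (cycle_graph 3).
Proof. by vm_compute. Qed.

Lemma obstructs_P4_P4 : obstructs (path_graph 4) (path_graph 4).
Proof. by vm_compute. Qed.

Theorem lemma9 (T1 T2 : finType) (g : rel T1) (h : rel T2) :
  simple_graph g -> simple_graph h ->
  one_perfectly_orientable (dprod_rel g h) ->
  [/\ (@has_induced _ g 3 (path_graph 3) \/ @has_induced _ g 3 (cycle_graph 3) -> forbidden_five h)
      /\ (@has_induced _ h 3 (path_graph 3) \/ @has_induced _ h 3 (cycle_graph 3) -> forbidden_five g),
      ~ @has_induced _ g 3 (cycle_graph 3) \/ ~ @has_induced _ h 3 (cycle_graph 3)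
    & ~ @has_induced _ g 4 (path_graph 4) \/ ~ @has_induced _ h 4 (path_graph 4)].
Proof.
move=> _ _ gh.
have forbidden_five_beside (S1 S2 : finType) (a : rel S1) (b : rel S2) :
    one_perfectly_orientable (dprod_rel a b) ->
    has_induced a (path_graph 3) \/ has_induced a (cycle_graph 3) -> forbidden_five b.
  move=> ab [aP3 | aC3]; first exact: forbidden_five_opo obstructs_five_P3 aP3 ab.
  exact: forbidden_five_opo obstructs_five_C3 aC3 ab.
have [_ oC3C3 _ _ _] := and5P obstructs_five_C3.
split; first split.
- exact: forbidden_five_beside gh.
- exact: forbidden_five_beside (opo_dprodC gh).
- by apply/not_and_or=> -[gC3 hC3]; apply: not_opo_dprod_induced oC3C3 gC3 hC3 gh.
- by apply/not_and_or=> -[gP4 hP4]; apply: not_opo_dprod_induced obstructs_P4_P4 gP4 hP4 gh.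
Qed.
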